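(* Consider the $(n,t_e,\lambda)$-full-access setting with $\lambda=\infty$ (Eve never switches the paths she accesses once chosen). Let $r=n-t_e$. For every integer $u>\log(2n-t_e)$ there is a one-round $(ur,\,un,\,0,\,0)$-PMT protocol over this setting; these protocols (indexed by $u$) form a P-PMT family with secrecy rate $R=1-\frac{t_e}{n}$.
   Context: Multipath setting: an $(n,t_a,t_b,t_e,\lambda)$-multipath setting ($0\le t_a,t_b,t_e\le n$) has a sender Alice, a receiver Bob and a passive, computationally unbounded eavesdropper Eve, connected by $n$ disjoint paths; Alice and Bob share no key. At any time Alice, Bob and Eve access at most $t_a,t_b,t_e$ paths respectively. Time is divided into intervals, each corresponding to sending $\lambda$ consecutive bits over a path; at the start of each interval every party (Eve included, adaptively) chooses its accessed paths and keeps them for the whole interval. Anything sent over a path is seen by all parties accessing that path in that interval; Eve's view is everything sent over her accessed paths. The case $t_a=t_b=n$ is called the $(n,t_e,\lambda)$-full-access setting. PMT protocol: a protocol is a $(k,c,\delta,\epsilon)$-PMT protocol if it transmits any message $S\in\{0,1\}^k$ from Alice to Bob using a total of $c$ communicated bits, with Bob outputting $\hat S$, such that $\Pr(\hat S\neq s)\le\delta$ for all $s\in\{0,1\}^k$ and $SD(View_E(s_1),View_E(s_2))\le\epsilon$ for all $s_1,s_2\in\{0,1\}^k$, where $View_E(s)$ is Eve's view when $s$ is sent (for any Eve strategy) and $SD(X,Y)=\frac12\sum_x|\Pr(X=x)-\Pr(Y=x)|$. Its secrecy rate is $k/c$. P-PMT family: a sequence $(\Pi_i)_{i\in\mathbb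 N}$ of $(k_i,c_i,0,0)$-PMT protocols with $k_{i+1}>k_i$; its P-secrecy rate is $\inf_i k_i/c_i$. Logarithms are base 2. *)

From HB Require Import structures.
From mathcomp Require Import all_boot all_order all_algebra.
From mathcomp Require Import boolp classical_sets reals exp.
Import Order.TTheory GRing.Theory Num.Theory.
Local Open Scope ring_scope.
Local Open Scope classical_set_scope.

Definition log2 {R : realType} (x : R) : R := ln x / ln 2.

(* A one-round protocol in the (n, t_e, lambda = oo)-full-access setting for
   k-bit messages: Alice draws randomness r from a finite probability space
   (rnd, rho), and sends the bit string enc s r i over path i (of fixed length
   len i).  Bob, who accesses all n paths, sees the whole word and decodes. *)
Record protocol (R : realType) (n k : nat) := Protocol {
  rnd : finType;
  rho : rnd -> R;
  len : 'I_n -> nat;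
  enc : k.-tuple bool -> rnd -> {ffun 'I_n -> seq bool};
  dec : {ffun 'I_n -> seq bool} -> k.-tuple bool }.
Arguments rnd {R n k}. Arguments rho {R n k}. Arguments len {R n k}.
Arguments enc {R n k}. Arguments dec {R n k}.

Set Implicit Arguments. Unset Strict Implicit. Unset Printing Implicit Defensive.

Section Defs.
Variables (R : realType) (n k : nat) (P : protocol R n k).

Definition valid_protocol : Prop :=
  [/\ forall r, 0 <= rho P r, \sum_r rho P r = 1
    & forall s r i, size (enc P s r i) = len P i].

Definition cost : nat := (\sum_i len P i)%N.

Definition prob (E : pred (rnd P)) : R := \sum_(r | E r) rho P r.

Definition err (s : k.-tuple bool) : R := prob (fun r => dec P (enc P s r) != s).

(* Eve's view when she accesses the set of paths E for the whole protocol
   (lambda = oo): the contents of the paths in E (other paths blanked). *)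
Definition view (E : {set 'I_n}) (w : {ffun 'I_n -> seq bool})
  : {ffun 'I_n -> seq bool} := [ffun i => if i \in E then w i else [::]].

Definition viewDist (E : {set 'I_n}) (s : k.-tuple bool) v : R :=
  prob (fun r => view E (enc P s r) == v).

(* statistical distance of Eve's views for s1 and s2; the sum ranges over the
   (finite) union of the supports, outside of which both probabilities are 0 *)
Definition SD_view (E : {set 'I_n}) (s1 s2 : k.-tuple bool) : R :=
  2^-1 * \sum_(v <- undup ([seq view E (enc P s1 r) | r <- enum (rnd P)]
                          ++ [seq view E (enc P s2 r) | r <- enum (rnd P)]))
           `|viewDist E s1 v - viewDist E s2 v|.

Definition is_PMT (te c : nat) (delta eps : R) : Prop :=
  [/\ valid_protocol, cost = c,
      forall s, err s <= delta
    & forall (E : {set 'I_n}), (#|E| <= te)%N ->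
        forall s1 s2, SD_view E s1 s2 <= eps].
End Defs.

Definition is_PPMT_family (R : realType) (n te : nat) (k c : nat -> nat)
  (Pi : forall i, protocol R n (k i)) : Prop :=
  (forall i, is_PMT (Pi i) te (c i) 0 0) /\ (forall i, (k i < k i.+1)%N).

Definition P_rate (R : realType) (k c : nat -> nat) : R :=
  inf [set x : R | exists i, x = (k i)%:R / (c i)%:R].

From HB Require Import structures.
From mathcomp Require Import all_boot all_order all_algebra all_field.
From mathcomp Require Import boolp classical_sets reals exp.
From mathcomp Require Import ring.

Set Implicit Arguments.
Unset Strict Implicit.
Unset Printing Implicit Defensive.

Import Order.TTheory GRing.Theory Num.Theory.
Local Open Scope ring_scope.

(* The message fills the n - t_e top coefficients of a polynomial of degree
   < n over GF(2^u) whose t_e low coefficients form a uniformly random key;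
   path i carries its value at the i-th of n distinct points.  Bob sees all n
   values and recovers the polynomial.  For any set E of at most t_e paths,
   interpolating the difference of the message parts of two messages on the
   points of E yields a key shift that makes the values on E agree; adding it
   is a permutation of the uniform key space, so Eve's view has the same
   distribution for both messages.  The bound u > log(2n - t_e) ensures
   2^u > n points exist, and each protocol has rate (n - t_e)/n. *)

Lemma card_leq_inj (A B : finType) :
  (#|A| <= #|B|)%N -> {f : A -> B | injective f}.
Proof.
move=> le_AB; exists (fun x => enum_val (widen_ord le_AB (enum_rank x))).
by move=> x y /enum_val_inj /(congr1 val) /= /val_inj /enum_rank_inj.
Qed.

Lemma poly_interpolation (F : fieldType) (xs : seq F) (g : F -> F) : uniq xs ->
  exists2 p : {poly F}, (size p <= size xs)%N & {in xs, forall x, p.[x] = g x}.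
Proof.
elim: xs => [|x xs IH] /=; first by exists 0; rewrite ?size_poly0.
case/andP=> x_notin_xs /IH [p size_p p_xs].
pose w := \prod_(y <- xs) ('X - y%:P).
have w_xs y : y \in xs -> w.[y] = 0.
  by move=> y_xs; apply/eqP; rewrite -/(root w y) root_prod_XsubC.
have w_x : w.[x] != 0 by rewrite -/(root w x) root_prod_XsubC.
exists (p + ((g x - p.[x]) / w.[x]) *: w).
  apply: leq_trans (size_polyD _ _) _; rewrite geq_max ltnW ?ltnS //=.
  by rewrite (leq_trans (size_scale_leq _ _)) // size_prod_XsubC.
move=> y; rewrite inE => /predU1P[->|y_xs]; rewrite hornerD hornerZ.
  by rewrite divfK // addrC subrK.
by rewrite (w_xs _ y_xs) mulr0 addr0 p_xs.
Qed.

Lemma poly_eq_on_uniq (F : idomainType) (xs : seq F) (p q : {poly F}) : uniq xs ->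
  (size p <= size xs)%N -> (size q <= size xs)%N ->
  {in xs, forall x, p.[x] = q.[x]} -> p = q.
Proof.
move=> xs_uniq size_p size_q pq_xs; apply/eqP; rewrite -subr_eq0; apply/eqP.
apply: (roots_geq_poly_eq0 _ xs_uniq).
  by apply/allP => x x_xs; rewrite /root hornerD hornerN pq_xs ?subrr.
by rewrite (leq_trans (size_polyD _ _)) // geq_max size_polyN size_p.
Qed.

Section ProtocolFacts.
Variables (R : realType) (n k : nat) (P : protocol R n k).

Lemma err_eq0 s : (forall r, dec P (enc P s r) = s) -> err P s = 0.
Proof. by move=> dec_enc; rewrite /err /prob big_pred0 // => r; rewrite dec_enc eqxx. Qed.

Lemma SD_view_eq0 E s1 s2 :
  viewDist P E s1 =1 viewDist P E s2 -> SD_view P E s1 s2 = 0.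
Proof.
by move=> eq_dist; rewrite /SD_view big1 ?mulr0 // => v _; rewrite eq_dist subrr normr0.
Qed.

Lemma viewDist_perm E s1 s2 (sigma : rnd P -> rnd P) : injective sigma ->
  (forall r, rho P (sigma r) = rho P r) ->
  (forall r, view E (enc P s1 r) = view E (enc P s2 (sigma r))) ->
  viewDist P E s1 =1 viewDist P E s2.
Proof.
move=> sigma_inj rho_sigma view_sigma v.
rewrite /viewDist /prob [RHS](reindex_inj sigma_inj) /=.
by apply: eq_big => r; rewrite ?view_sigma ?rho_sigma.
Qed.
End ProtocolFacts.

Section ShareProtocol.
Variables (R : realType) (F : finFieldType) (n te u k : nat).
Hypothesis le_te_n : (te <= n)%N.
Variable pt : 'I_n -> F.
Hypothesis pt_inj : injective pt.
Variable bits : F -> u.-tuple bool.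
Hypothesis bits_inj : injective bits.
Variable msg : k.-tuple bool -> 'rV[F]_(n - te).
Hypothesis msg_inj : injective msg.

Definition share_poly s (K : 'rV[F]_te) : {poly F} :=
  rVpoly K + rVpoly (msg s) * 'X^te.

Definition share s K : {ffun 'I_n -> seq bool} :=
  [ffun i => val (bits (share_poly s K).[pt i])].

Lemma size_share_poly s K : (size (share_poly s K) <= n)%N.
Proof.
rewrite (leq_trans (size_polyD _ _)) // geq_max (leq_trans (size_poly _ _)) //=.
rewrite (leq_trans (size_polyMleq _ _)) // size_polyXn addnS /= addnC.
by rewrite -leq_subRL // size_poly.
Qed.

Lemma share_poly_msg s K : drop_poly te (share_poly s K) = rVpoly (msg s).
Proof. exact/drop_polyDMXn/size_poly. Qed.

Lemma share_msg_inj s s' K K' : share s K = share s' K' -> s = s'.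
Proof.
move=> eq_share.
have eq_eval i : (share_poly s K).[pt i] = (share_poly s' K').[pt i].
  by apply/bits_inj/val_inj; move/ffunP/(_ i): eq_share; rewrite !ffunE.
have pts_uniq : uniq [seq pt i | i <- enum 'I_n] by rewrite map_inj_uniq ?enum_uniq.
have size_pts : size [seq pt i | i <- enum 'I_n] = n by rewrite size_map size_enum_ord.
have : share_poly s K = share_poly s' K'.
  apply: (poly_eq_on_uniq pts_uniq); rewrite ?size_pts ?size_share_poly //.
  by move=> _ /mapP[i _ ->].
by move/(congr1 (drop_poly te)); rewrite !share_poly_msg => /(can_inj rVpolyK)/msg_inj.
Qed.

Lemma share_view_shift (E : {set 'I_n}) s1 s2 : (#|E| <= te)%N ->
  exists D, forall K, view E (share s1 K) = view E (share s2 (K + D)).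
Proof.
move=> card_E; pose msg_poly s := rVpoly (msg s) * 'X^te.
have pts_uniq : uniq [seq pt i | i <- enum E] by rewrite map_inj_uniq ?enum_uniq.
have [p size_p p_E] :=
  poly_interpolation (fun x => (msg_poly s1).[x] - (msg_poly s2).[x]) pts_uniq.
have size_p_te : (size p <= te)%N by rewrite (leq_trans size_p) // size_map -cardE.
exists (poly_rV p) => K; apply/ffunP => i; rewrite !ffunE; case: ifP => // i_E.
rewrite /share_poly linearD /= (poly_rV_K size_p_te) !hornerD p_E ?map_f ?mem_enum //.
by rewrite -addrA subrK.
Qed.

Definition share_protocol : protocol R n k :=
  @Protocol R n k 'rV[F]_te (fun _ => (#|{: 'rV[F]_te}|%:R)^-1) (fun _ => u) share
    (fun w => if [pick sK : k.-tuple bool * 'rV[F]_te | share sK.1 sK.2 == w]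
              is Some sK then sK.1 else [tuple of nseq k false]).

Lemma share_protocol_PMT : is_PMT share_protocol te (u * n) 0 0.
Proof.
have card_keys : (0 < #|{: 'rV[F]_te}|)%N by apply/card_gt0P; exists 0.
split.
- split.
  + by move=> K /=; rewrite invr_ge0 ler0n.
  + by rewrite /= sumr_const -[_ *+ #|_|]mulr_natr mulVf // pnatr_eq0 -lt0n.
  + by move=> s K i /=; rewrite ffunE size_tuple.
- by rewrite /cost /= sum_nat_const card_ord mulnC.
- move=> s; rewrite err_eq0 // => K /=.
  case: pickP => [sK /eqP/share_msg_inj //|no_pick].
  by have := no_pick (s, K); rewrite eqxx.
- move=> E card_E s1 s2; have [D view_D] := share_view_shift s1 s2 card_E.
  rewrite SD_view_eq0 //.
  exact: (@viewDist_perm _ _ _ share_protocol _ _ _ _ (addIr D)) view_D.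
Qed.
End ShareProtocol.

Lemma exists_share_protocol (R : realType) (n te u : nat) :
  (te <= n)%N -> (0 < u)%N -> (n <= 2 ^ u)%N ->
  exists P : protocol R n (u * (n - te)), is_PMT P te (u * n) 0 0.
Proof.
move=> le_te_n u_gt0 le_n_2u.
have [F _ card_F] := pPrimePowerField (isT : prime 2) u_gt0.
have [pt pt_inj] : {f : 'I_n -> F | injective f}.
  by apply: card_leq_inj; rewrite card_ord card_F.
have [bits bits_inj] : {f : F -> u.-tuple bool | injective f}.
  by apply: card_leq_inj; rewrite card_tuple card_bool card_F.
have [msg msg_inj] : {f : (u * (n - te)).-tuple bool -> 'rV[F]_(n - te) | injective f}.
  by apply: card_leq_inj; rewrite card_tuple card_mx card_bool card_F mul1n expnM.
by exists (share_protocol R pt bits msg); exact: share_protocol_PMT.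
Qed.

Lemma log2_lt_expn (R : realType) (x u : nat) : (0 < x)%N ->
  log2 (x%:R : R) < u%:R -> (x < 2 ^ u)%N.
Proof.
move=> x_gt0; apply: contraTT; rewrite -leqNgt -leNgt /log2 => le_2u_x.
rewrite ler_pdivlMr ?ln_gt0 ?ltr1n // mulr_natl -lnXn ?ltr0n //.
by rewrite ler_ln ?posrE ?exprn_gt0 ?ltr0n // -natrX ler_nat.
Qed.

Lemma P_rate_const (R : realType) (k c : nat -> nat) (x : R) :
  (forall i, (k i)%:R / (c i)%:R = x) -> P_rate R k c = x.
Proof.
move=> kc_x; rewrite /P_rate -[RHS]inf1; congr inf.
by apply/seteqP; split => y /= => [[i ->]|->]; [exact: kc_x | exists 0%N; rewrite kc_x].
Qed.

Lemma ratio_mul_subn (R : realType) (u n te : nat) :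
  (0 < u)%N -> (te < n)%N ->
  ((u * (n - te))%:R / (u * n)%:R : R) = 1 - te%:R / n%:R.
Proof.
move=> u_gt0 lt_te_n.
have u_neq0 : (u%:R : R) != 0 by rewrite pnatr_eq0 -lt0n.
have n_neq0 : (n%:R : R) != 0 by rewrite pnatr_eq0 -lt0n (leq_ltn_trans _ lt_te_n).
by rewrite !natrM natrB ?(ltnW lt_te_n) //; field; rewrite u_neq0 n_neq0.
Qed.

Theorem theorem1 (R : realType) (n te : nat) (hte : (te < n)%N) :
  let r := (n - te)%N in
  (forall u : nat, log2 ((2 * n - te)%N%:R : R) < u%:R ->
     exists P : protocol R n (u * r), is_PMT P te (u * n) 0 0)
  /\
  (forall u0 : nat, log2 ((2 * n - te)%N%:R : R) < u0%:R ->
     exists Pi : forall i : nat, protocol R n ((u0 + i) * r),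
       is_PPMT_family te (fun i => ((u0 + i) * n)%N) Pi /\
       P_rate R (fun i => ((u0 + i) * r)%N) (fun i => ((u0 + i) * n)%N)
         = 1 - te%:R / n%:R).
Proof.
move=> r.
have lt_n_2n_te : (n < 2 * n - te)%N by rewrite ltn_subRL mul2n -addnn ltn_add2r.
have field_size u : log2 ((2 * n - te)%N%:R : R) < u%:R -> (0 < u)%N /\ (n < 2 ^ u)%N.
  move/(log2_lt_expn (leq_ltn_trans (leq0n n) lt_n_2n_te)) => lt_2u.
  split; last exact: ltn_trans lt_2u.
  rewrite lt0n; apply: contraTneq lt_2u => ->.
  by rewrite expn0 -leqNgt (leq_ltn_trans _ lt_n_2n_te).
have protocol_u u : log2 ((2 * n - te)%N%:R : R) < u%:R ->
    exists P : protocol R n (u * r), is_PMT P te (u * n) 0 0.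
  by case/field_size => u_gt0 /ltnW; exact: exists_share_protocol (ltnW hte) u_gt0.
split => // u0 log_u0.
have log_u0i i : log2 ((2 * n - te)%N%:R : R) < (u0 + i)%:R.
  by apply: lt_le_trans log_u0 _; rewrite ler_nat leq_addr.
exists (fun i => sval (cid (protocol_u _ (log_u0i i)))); split; first split.
- by move=> i; exact: svalP (cid (protocol_u _ (log_u0i i))).
- by move=> i; rewrite ltn_mul2r subn_gt0 hte addnS ltnSn.
- have [u0_gt0 _] := field_size _ log_u0.
  by apply: P_rate_const => i; rewrite ratio_mul_subn // ltn_addr.
Qed.
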